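(* Let $(S,d)$ be a complete metric space with a Hausdorff topology $\sigma$ compatible with $d$, let $\phi,\phi_\epsilon:S\to(-\infty,+\infty]$ ($\epsilon>0$) and $\epsilon(\tau)>0$ with $\epsilon(\tau)\to0$ as $\tau\to0$, and suppose $\phi,(\phi_\epsilon)$ satisfy (A1), (A2), and (A3) with this choice $\epsilon(\tau)$ (see context). Let $r(\epsilon)>0$ with $r(\epsilon)\uparrow+\infty$ as $\epsilon\to0$, fix $u_{\star\star}\in S$, and set $\tilde\phi_\epsilon=\phi_\epsilon+\mathbb{I}_{\{d(u_{\star\star},\cdot)\le r(\epsilon)\}}$, where $\mathbb{I}_V=0$ on $V$ and $+\infty$ on $S\setminus V$. Then $\phi,(\tilde\phi_\epsilon)_{\epsilon>0}$ also satisfy (A1), (A2), and (A3) with the same choice $\epsilon(\tau)$.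
   Context: $\sigma$ compatible with $d$: if $u_n\stackrel{\sigma}{\rightharpoonup}u$, $v_n\stackrel{\sigma}{\rightharpoonup}v$ then $\liminf_n d(u_n,v_n)\ge d(u,v)$; if $d(u_n,v_n)\to0$ and $u_n\stackrel{\sigma}{\rightharpoonup}u$ then $v_n\stackrel{\sigma}{\rightharpoonup}u$. Local slope $|\partial\phi|(v)=\limsup_{w\stackrel{d}{\to}v}\frac{(\phi(v)-\phi(w))^+}{d(v,w)}$; relaxed slope $|\partial^-\phi|(u)=\inf\{\liminf_n|\partial\phi|(u_n): u_n\stackrel{\sigma}{\rightharpoonup}u,\ \sup_n\{d(u_n,u),\phi(u_n)\}<+\infty\}$; $\mathcal{Y}_\tau f(u)=\inf_{v}\{f(v)+\frac1{2\tau}d^2(v,u)\}$. For a family $(f_\epsilon)$: (A1) there exist $A,B>0,u_\star$ with $f_\epsilon\ge-A-Bd^2(\cdot,u_\star)$ for all $\epsilon$, and for $\epsilon_n\to0$, $\sup_{n,m}\{f_{\epsilon_n}(u_n),d(u_n,u_m)\}<\infty$ implies a $\sigma$-convergent subsequence; (A2) for $\epsilon_n\to0$, $\sup_{n,m}d(u_n,u_m)<\infty$ and $u_n\stackrel{\sigma}{\rightharpoonup}u$ imply $\liminf_n f_{\epsilon_n}(u_n)\ge\phi(u)$; (A3) for all $u_\tau\stackrel{\sigma}{\rightharpoonup}u$ with $\sup_\tau\{f_{\epsilon(\tau)}(u_\tau),d(u_\tau,u)\}<\infty$, $\liminf_{\tau\to0}\frac{f_{\epsilon(\tau)}(u_\tau)-\mathcal{Y}_\tau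 f_{\epsilon(\tau)}(u_\tau)}{\tau}\ge\frac12|\partial^-\phi|^2(u)$. *)

From HB Require Import structures.
From mathcomp Require Import all_boot all_order all_algebra.
From mathcomp Require Import all_classical all_reals all_analysis.
Set Implicit Arguments. Unset Strict Implicit. Unset Printing Implicit Defensive.
Import Order.TTheory GRing.Theory Num.Theory numFieldNormedType.Exports.
Local Open Scope classical_set_scope.
Local Open Scope ring_scope.

Section Defs.
Context {R : realType} {S : topologicalType}.
Variable d : S -> S -> R.

Definition is_metric : Prop :=
  [/\ forall x y, 0 <= d x y,
      forall x y, d x y = 0 <-> x = y,
      forall x y, d x y = d y x &
      forall x y z, d x z <= d x y + d y z].

Definition d_complete : Prop :=
  forall u : nat -> S,
    (forall e : R, 0 < e -> exists N : nat, forall n m : nat,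
        (N <= n)%N -> (N <= m)%N -> d (u n) (u m) < e) ->
    exists x : S, (fun n => d (u n) x) @ \oo --> (0%R : R).

(* the topology sigma of S (sequential convergence u @ \oo --> x) is
   compatible with d *)
Definition compatible : Prop :=
  (forall (u v : nat -> S) (x y : S),
      u @ \oo --> x -> v @ \oo --> y ->
      ((d x y)%:E <= limn_einf (fun n => (d (u n) (v n))%:E))%E) /\
  (forall (u v : nat -> S) (x : S),
      (fun n => d (u n) (v n)) @ \oo --> (0%R : R) ->
      u @ \oo --> x -> v @ \oo --> x).

Local Open Scope ereal_scope.

(* local slope |d phi|(v) = limsup_{w -d-> v} (phi v - phi w)^+ / d(v,w),
   written as inf_{delta>0} sup_{0<d(v,w)<delta}; the value is 0 at
   d-isolated points (0 is included in the sup since the quotients are >= 0).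
   Outside the domain (phi v = +oo) we use the convention +oo. *)
Definition local_slope (phi : S -> \bar R) (v : S) : \bar R :=
  if phi v == +oo then +oo else
  ereal_inf [set ereal_sup ([set 0] `|`
     [set maxe (phi v - phi w) 0 * ((d v w)^-1)%:E
        | w in [set w | (0 < d v w)%R /\ (d v w < delta)%R]])
     | delta in [set delta : R | (0 < delta)%R]].

Definition relaxed_slope (phi : S -> \bar R) (u : S) : \bar R :=
  ereal_inf [set limn_einf (fun n => local_slope phi (un n))
     | un in [set un : nat -> S | un @ \oo --> u /\
         exists C : R, forall n, (d (un n) u <= C)%R /\ phi (un n) <= C%:E]].

Definition yosida (tau : R) (f : S -> \bar R) (u : S) : \bar R :=
  ereal_inf [set f v + ((d v u ^+ 2) / (2 * tau))%:E | v in [set: S]].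

Definition liminf0 (g : R -> \bar R) : \bar R :=
  ereal_sup [set ereal_inf [set g tau | tau in [set tau : R | (0 < tau)%R /\ (tau < delta)%R]]
     | delta in [set delta : R | (0 < delta)%R]].

(* (A1) for the family f (f e is phi_e, for e > 0) *)
Definition A1 (f : R -> S -> \bar R) : Prop :=
  (exists (A B : R) (ustar : S), (0 < A)%R /\ (0 < B)%R /\
     forall e : R, (0 < e)%R -> forall v : S,
       (- A - B * d v ustar ^+ 2)%:E <= f e v) /\
  (forall (en : nat -> R) (un : nat -> S),
     (forall n, (0 < en n)%R) -> en @ \oo --> (0%R : R) ->
     (exists C : R, forall n m, f (en n) (un n) <= C%:E /\ (d (un n) (un m) <= C)%R) ->
     exists (sub : nat -> nat) (u : S),
       {homo sub : n m / (n < m)%N >-> (n < m)%N} /\ (un \o sub) @ \oo --> u).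

Definition A2 (phi : S -> \bar R) (f : R -> S -> \bar R) : Prop :=
  forall (en : nat -> R) (un : nat -> S) (u : S),
    (forall n, (0 < en n)%R) -> en @ \oo --> (0%R : R) ->
    (exists C : R, forall n m, (d (un n) (un m) <= C)%R) ->
    un @ \oo --> u ->
    phi u <= limn_einf (fun n => f (en n) (un n)).

Definition A3 (phi : S -> \bar R) (f : R -> S -> \bar R) (eps : R -> R) : Prop :=
  forall (ut : R -> S) (u : S),
    ut @ 0^'+ --> u ->
    (exists C : R, forall tau : R, (0 < tau)%R ->
        f (eps tau) (ut tau) <= C%:E /\ (d (ut tau) u <= C)%R) ->
    (2^-1)%:E * (relaxed_slope phi u * relaxed_slope phi u)
      <= liminf0 (fun tau =>
           (f (eps tau) (ut tau) - yosida tau (f (eps tau)) (ut tau)) * (tau^-1)%:E).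

Definition ind (V : set S) (u : S) : \bar R := if `[< V u >] then 0 else +oo.

End Defs.

From HB Require Import structures.
From mathcomp Require Import all_boot all_order all_algebra.
From mathcomp Require Import all_classical all_reals all_analysis.
From mathcomp Require Import lra.
Import Order.TTheory GRing.Theory Num.Theory numFieldNormedType.Exports.
Local Open Scope classical_set_scope.
Local Open Scope ring_scope.

(** Adding the indicator of a ball only raises [phi_eps], which gives the
    lower bound and (A2) for free; on sublevel sets it changes nothing, which
    gives the compactness part of (A1).  For (A3) the point is that the
    Moreau-Yosida infimum is unchanged for small [tau]: a competitor [v]
    outside the ball of radius [r(eps tau)] around [u_star_star] is far from
    [u_tau], so by the quadratic lower bound of (A1) the penalty
    [d^2(v, u_tau)/(2 tau)] outweighs [-A - B d^2(v, u_star)] once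
    [8 B tau <= 1], and [v] does worse than the trivial competitor [u_tau]. *)

Lemma le_limn_einf (R : realType) (u v : (\bar R)^nat) :
  (forall n, (u n <= v n)%E) -> (limn_einf u <= limn_einf v)%E.
Proof.
move=> uv; rewrite !limn_einf_lim.
apply: lee_lim; [exact: is_cvg_einfs|exact: is_cvg_einfs|].
apply: nearW => n /=; apply: le_ereal_inf_tmp => _ [k kn <-].
by apply: le_trans (uv k); apply: ereal_inf_lbound; exists k.
Qed.

Lemma le_liminf0_near (R : realType) (g h : R -> \bar R) :
  (\forall t \near 0^'+, (h t <= g t)%E) -> (liminf0 h <= liminf0 g)%E.
Proof.
move=> /nbhs_ballP[dl /= dl0 hg].
apply: ge_ereal_sup => _ [e /= e0 <-].
apply: (@le_trans _ _ (ereal_inf [set g t | t in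
   [set t : R | 0 < t /\ t < Num.min e dl]])).
  apply: le_ereal_inf_tmp => _ [t [t0 +] <-]; rewrite lt_min => /andP[te tdl].
  apply: le_trans (hg t _ t0); first by apply: ereal_inf_lbound; exists t.
  by rewrite /ball /= sub0r normrN gtr0_norm.
by apply: ereal_sup_ubound; exists (Num.min e dl) => //=; rewrite lt_min e0.
Qed.

Lemma cvg_at_right0 {R : realType} {g : R -> R} :
  (forall t, 0 < t -> 0 < g t) -> g x @[x --> 0^'+] --> (0 : R) ->
  g x @[x --> 0^'+] --> (0 : R)^'+.
Proof.
move=> gpos g0 P /nbhs_ballP[e /= e0 gP].
suff : \forall t \near 0^'+, P (g t) by [].
near=> t; apply: gP; last by apply: gpos; near: t; exact: nbhs_right_gt.
by near: t; exact: (cvgr_dist_lt _ _ g0 _ e0).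
Unshelve. all: end_near.
Qed.

Lemma large_sqr_ge {R : realFieldType} (X c : R) :
  0 < c -> exists M, forall s, M <= s -> X <= c * s ^+ 2.
Proof.
move=> c0; exists (1 + `|X| / c) => s Ms.
have cy : c * (`|X| / c) = `|X| by rewrite mulrCA mulfV ?gt_eqF ?mulr1.
have y0 : 0 <= `|X| / c by rewrite divr_ge0 // ltW.
have s1 : 1 <= s by lra.
have ss : s <= s ^+ 2 by rewrite expr2 ler_peMl // (le_trans ler01).
have := ler_norm X; have : c * s <= c * s ^+ 2 by rewrite ler_pM2l.
nra.
Qed.

Lemma quadratic_penalty_dominates (R : realFieldType) (A B C D tau s x : R) :
  0 < B -> 0 < tau -> 8 * B * tau <= 1 -> 0 <= x -> x <= s + D ->
  C + A + 2 * B * D ^+ 2 <= 2 * B * s ^+ 2 ->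
  C <= - A - B * x ^+ 2 + s ^+ 2 / (2 * tau).
Proof.
move=> B0 tau0 Btau x0 xsD hs.
have s_large : 4 * B * s ^+ 2 <= s ^+ 2 / (2 * tau).
  rewrite ler_pdivlMr ?mulr_gt0 //; have := sqr_ge0 s; nra.
have x_small : x ^+ 2 <= 2 * s ^+ 2 + 2 * D ^+ 2.
  have := sqr_ge0 (s - D); rewrite !expr2; nra.
have : B * x ^+ 2 <= B * (2 * s ^+ 2 + 2 * D ^+ 2) by rewrite ler_pM2l.
lra.
Qed.

Section Penalization.
Context {R : realType} {S : topologicalType} (d : S -> S -> R).
Local Open Scope ereal_scope.

Lemma le_addind (g : S -> \bar R) (V : set S) u : g u <= g u + ind V u.
Proof. by apply: leeDl; rewrite /ind; case: asboolP. Qed.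

Lemma addind_bounded {g : S -> \bar R} {V : set S} {u : S} {C : R} :
  g u != -oo -> g u + ind V u <= C%:E -> V u /\ g u + ind V u = g u.
Proof. by rewrite /ind; case: asboolP => Vu gu; rewrite ?adde0 // addey. Qed.

Lemma yosida_addind_le (tau : R) (g : S -> \bar R) (V : set S) u :
  d u u = 0%R ->
  (forall v, ~ V v -> g u + ind V u <= g v + (d v u ^+ 2 / (2 * tau))%:E) ->
  yosida d tau (fun v => g v + ind V v) u <= yosida d tau g u.
Proof.
move=> duu far; apply: le_ereal_inf_tmp => _ [v _ <-].
have [Vv|nVv] := pselect (V v).
  by apply: ereal_inf_lbound; exists v => //; rewrite /ind asboolT ?adde0.
apply: le_trans (far v nVv); apply: ereal_inf_lbound; exists u => //.
by rewrite duu expr0n /= mul0r adde0.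
Qed.

Lemma A1_addind (f : R -> S -> \bar R) (V : R -> set S) :
  (forall e u, (0 < e)%R -> f e u != -oo) ->
  A1 d f -> A1 d (fun e u => f e u + ind (V e) u).
Proof.
move=> fNy [[A [B [us [A0 [B0 flow]]]]] fcpt]; split.
  exists A, B, us; split => //; split => // e e0 v.
  exact: le_trans (flow e e0 v) (le_addind _ _ _).
move=> en un en0 en_cvg [C HC]; apply: fcpt => //; exists C => n m.
have [fC dC] := HC n m; split => //.
by rewrite -(addind_bounded (fNy _ _ (en0 n)) fC).2.
Qed.

Lemma A2_addind (phi : S -> \bar R) (f : R -> S -> \bar R) (V : R -> set S) :
  A2 d phi f -> A2 d phi (fun e u => f e u + ind (V e) u).
Proof.
move=> hA2 en un u en0 en_cvg dC un_cvg.
apply: le_trans (hA2 en un u en0 en_cvg dC un_cvg) _.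
by apply: le_limn_einf => n; exact: le_addind.
Qed.

Lemma quadratic_lower_bound_yosida_term (g : S -> \bar R) (A B C D tau : R)
    (us v w : S) :
  is_metric d -> (0 < B)%R -> (0 < tau)%R -> (8 * B * tau <= 1)%R ->
  (forall v, (- A - B * d v us ^+ 2)%:E <= g v) -> (d w us <= D)%R ->
  (C + A + 2 * B * D ^+ 2 <= 2 * B * d v w ^+ 2)%R ->
  C%:E <= g v + (d v w ^+ 2 / (2 * tau))%:E.
Proof.
move=> [d0 _ _ dtri] B0 tau0 Btau glow wD hs.
apply: le_trans (leeD (glow v) (lexx _)); rewrite -EFinD lee_fin.
apply: quadratic_penalty_dominates hs => //.
by apply: le_trans (dtri v w us) _; rewrite lerD2l.
Qed.

Lemma A3_addind_ball {phi : S -> \bar R} {f : R -> S -> \bar R}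
    {eps r : R -> R} {u0 us : S} {A B : R} :
  is_metric d -> (forall e u, (0 < e)%R -> f e u != -oo) ->
  (forall tau, (0 < tau)%R -> (0 < eps tau)%R) ->
  eps x @[x --> 0^'+] --> (0%R : R) -> r x @[x --> 0^'+] --> +oo%R ->
  (0 < B)%R -> (forall e, (0 < e)%R -> forall v, (- A - B * d v us ^+ 2)%:E <= f e v) ->
  A3 d phi f eps ->
  A3 d phi (fun e u => f e u + ind [set v | (d u0 v <= r e)%R] u) eps.
Proof.
move=> dm fNy eps0 eps_cvg r_cvg B0 flow hA3 ut u ut_cvg [C HC].
have [_ dxx dsym dtri] := dm.
apply: le_trans (hA3 ut u ut_cvg _) _.
  exists C => tau tau0; have [fC dC] := HC tau tau0.
  by split => //; exact: le_trans (le_addind _ _ _) fC.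
pose D := (C + d u us)%R.
have B2 : (0 < 2 * B)%R by rewrite mulr_gt0.
have [M HM] := large_sqr_ge (C + A + 2 * B * D ^+ 2)%R _ B2.
have small_tau : \forall tau \near 0%R^'+,
    [/\ (0 < tau)%R, (8 * B * tau <= 1)%R & (M + (d u0 u + C) < r (eps tau))%R].
  near=> tau; split.
  - by near: tau; exact: nbhs_right_gt.
  - rewrite -ler_pdivlMl ?mulr_gt0 // mulr1; near: tau.
    by apply: nbhs_right_le; rewrite invr_gt0 mulr_gt0.
  - near: tau; move: (cvg_comp _ _ (cvg_at_right0 eps0 eps_cvg) r_cvg).
    by move/cvgryPgt; apply.
apply: le_liminf0_near; move: small_tau; apply: filterS => tau [tau0 Btau rlarge].
have [fC dC] := HC tau tau0.
have [_ fE] := addind_bounded (fNy _ _ (eps0 _ tau0)) fC.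
rewrite fE; apply: lee_wpmul2r; first by rewrite lee_fin invr_ge0 ltW.
apply: leeB => //; apply: yosida_addind_le => [|v /=]; first exact/dxx.
move=> /negP; rewrite -ltNge => far; apply: le_trans fC _.
apply: (@quadratic_lower_bound_yosida_term _ _ _ _ D _ _ _ _ dm B0 tau0 Btau
  (flow _ (eps0 _ tau0))).
  by apply: le_trans (dtri _ u _) _; rewrite lerD2r.
apply: HM; have := dtri u0 u v; have := dtri u (ut tau) v.
by rewrite (dsym u (ut tau)) (dsym v (ut tau)); lra.
Unshelve. all: end_near.
Qed.

End Penalization.

Theorem mainTheorem9 (R : realType) (S : topologicalType) (d : S -> S -> R)
  (phi : S -> \bar R) (f : R -> S -> \bar R) (eps : R -> R) (r : R -> R)
  (ustarstar : S) :
  is_metric d -> d_complete d -> hausdorff_space S -> compatible d ->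
  (forall u, phi u != -oo%E) ->
  (forall e u, 0 < e -> f e u != -oo%E) ->
  (forall tau, 0 < tau -> 0 < eps tau) -> eps x @[x --> 0^'+] --> (0%R : R) ->
  A1 d f -> A2 d phi f -> A3 d phi f eps ->
  (forall e, 0 < e -> 0 < r e) ->
  (forall e1 e2, 0 < e1 -> e1 <= e2 -> r e2 <= r e1) ->
  r x @[x --> 0^'+] --> +oo ->
  let ftilde := fun e u => (f e u + ind [set v | (d ustarstar v <= r e)%R] u)%E in
  A1 d ftilde /\ A2 d phi ftilde /\ A3 d phi ftilde eps.
Proof.
move=> dm _ _ _ _ fNy eps0 eps_cvg hA1 hA2 hA3 _ _ r_cvg ftilde.
have [[A [B [us [_ [B0 flow]]]]] _] := hA1.
split; first exact: A1_addind.
split; first exact: A2_addind.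
exact: (A3_addind_ball d dm fNy eps0 eps_cvg r_cvg B0 flow hA3).
Qed.
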